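(* A linear dendron $T$ is reducible if and only if $T$ is a star $S_n$ whose number of states $n$ is a composite number.
   Context: A finite dynamical system (FDS) is a function $A:S_A\to S_A$ on a finite set, considered up to isomorphism of functional graphs (arcs $x\to A(x)$). The product $AB$ acts on $S_A\times S_B$ by $(a,b)\mapsto(A(a),B(b))$. An FDS $T$ is reducible if $T=AB$ for FDSs $A,B$ each having strictly fewer states than $T$. A dendron is an FDS with connected functional graph and a fixpoint. A predecessor of a state $s$ is a state $t$ with $A(t)=s$. A linear dendron is a dendron in which every state other than the fixpoint has at most one predecessor. The depth of a dendron is the maximum, over states $s$, of the least $m\ge 0$ such that the $m$-fold iterate of the map sends $s$ to the fixpoint. A star $S_n$ is a linear dendron of depth at most $1$ with $n$ states (a fixpoint together with $n-1$ states mapped directly to it). *)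

From mathcomp Require Import all_boot.
Set Implicit Arguments. Unset Strict Implicit. Unset Printing Implicit Defensive.

(* An FDS is represented by a map f : S -> S on a finite type S. *)

Definition fds_iso (S S' : finType) (f : S -> S) (g : S' -> S') : Prop :=
  exists h : S -> S', bijective h /\ forall x, h (f x) = g (h x).

Definition fds_prod (A B : finType) (fA : A -> A) (fB : B -> B) : A * B -> A * B :=
  fun p => (fA p.1, fB p.2).

Definition reducible (T : finType) (f : T -> T) : Prop :=
  exists (A B : finType) (fA : A -> A) (fB : B -> B),
    #|A| < #|T| /\ #|B| < #|T| /\ fds_iso f (fds_prod fA fB).

(* Underlying undirected graph of the functional graph (arcs x -> f x). *)
Definition fds_adj (T : finType) (f : T -> T) : rel T :=
  fun x y => (f x == y) || (f y == x).

Definition fds_connected (T : finType) (f : T -> T) : Prop :=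
  forall x y : T, connect (fds_adj f) x y.

Definition has_fixpoint (T : finType) (f : T -> T) : Prop :=
  exists x, f x = x.

Definition dendron (T : finType) (f : T -> T) : Prop :=
  fds_connected f /\ has_fixpoint f.

Definition preds (T : finType) (f : T -> T) (s : T) : {set T} :=
  [set t | f t == s].

Definition linear_dendron (T : finType) (f : T -> T) : Prop :=
  dendron f /\ forall s, f s != s -> #|preds f s| <= 1.

Definition depth_le (T : finType) (f : T -> T) (k : nat) : Prop :=
  exists r, f r = r /\ forall s, exists m, m <= k /\ iter m f s = r.

Definition is_star (T : finType) (f : T -> T) (n : nat) : Prop :=
  linear_dendron f /\ depth_le f 1 /\ #|T| = n.

Definition composite (n : nat) : bool := (1 < n) && ~~ prime n.

(** Suppose a linear dendron is isomorphic to a product [A B] of two FDSs with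
    at least two states each, and let [(a0, b0)] be the fixpoint.  Since every
    state of [A] flows into [a0], some [x <> a0] is mapped onto [a0].  If some
    [y] had [B y <> b0], then [B y] would not be fixed, so the non-fixed state
    [(a0, B y)] would have the two predecessors [(a0, y)] and [(x, y)].  Hence
    [B], and symmetrically [A], is constant: the product is a star whose number
    of states [|A| |B|] is composite.  Conversely a star with [n = d e] states
    is the product of the stars with [d] and [e] states. *)

From mathcomp Require Import all_boot.
From mathcomp Require Import zify.

Set Implicit Arguments.
Unset Strict Implicit.
Unset Printing Implicit Defensive.

Lemma fconnect_fixpointE (S : finType) (f : S -> S) x y :
  f x = x -> fconnect f x y -> y = x.
Proof. by move=> f_x /iter_findex <-; rewrite iter_fix. Qed.

Lemma fconnect_fixpoint_pred (S : finType) (f : S -> S) x r :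
  x != r -> fconnect f x r -> exists2 t, t != r & f t = r.
Proof.
move=> x_r /iter_findex; move: (findex f x r) => n.
elim: n x x_r => [|n IHn] x x_r; first by move/eqP: x_r.
rewrite iterSr; have [fx_r _ | fx_r] := eqVneq (f x) r.
  by exists x.
exact: IHn.
Qed.

Section FlowToFixpoint.

Variables (S : finType) (f : S -> S) (r : S).
Hypothesis f_r : f r = r.

Lemma fconnect_fixpoint_step x : fconnect f (f x) r = fconnect f x r.
Proof.
apply/idP/idP; first exact: connect_trans (fconnect1 f x).
move/iter_findex => iter_x.
by rewrite -[r]f_r -iter_x -iterS iterSr fconnect_iter.
Qed.

Lemma fds_connected_fconnect : fds_connected f -> forall s, fconnect f s r.
Proof.
move=> conn s; have closed_r : closed (fds_adj f) [pred x | fconnect f x r].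
  by move=> x y /orP[] /eqP <-; rewrite !inE fconnect_fixpoint_step.
by have := closed_connect closed_r (conn s r); rewrite !inE connect0 => ->.
Qed.

End FlowToFixpoint.

Section Conjugacy.

Variables (S S' : finType) (f : S -> S) (g : S' -> S') (h : S -> S').
Hypotheses (h_bij : bijective h) (h_conj : forall x, h (f x) = g (h x)).

Let h_inj : injective h := bij_inj h_bij.

Lemma connect_adj_conj x y :
  connect (fds_adj f) x y -> connect (fds_adj g) (h x) (h y).
Proof.
have adj_h u v : fds_adj f u v -> fds_adj g (h u) (h v).
  by rewrite /fds_adj -!h_conj !(inj_eq h_inj).
case/connectP=> p p_path ->; apply/connectP.
by exists (map h p); [exact: homo_path p_path | rewrite last_map].
Qed.

Lemma preds_conj s : preds g (h s) = h @: preds f s.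
Proof.
have [hi hK hiK] := h_bij; apply/setP=> q.
by rewrite -(hiK q) (mem_imset _ _ h_inj) !inE -h_conj (inj_eq h_inj).
Qed.

Lemma linear_dendron_conj : linear_dendron f -> linear_dendron g.
Proof.
have [hi hK hiK] := h_bij.
case=> [[conn [r f_r]] lin]; split; first split.
- by move=> x y; rewrite -(hiK x) -(hiK y); apply: connect_adj_conj.
- by exists (h r); rewrite -h_conj f_r.
- move=> s; rewrite -(hiK s) -h_conj (inj_eq h_inj) preds_conj card_imset //.
  exact: lin.
Qed.

Lemma const_conj : (forall x y, g x = g y) -> forall x y, f x = f y.
Proof. by move=> g_const x y; apply: h_inj; rewrite !h_conj. Qed.

End Conjugacy.

Lemma linear_dendron_iso (S S' : finType) (f : S -> S) (g : S' -> S') :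
  fds_iso f g -> linear_dendron f -> linear_dendron g.
Proof. by case=> h [h_bij h_conj]; apply: linear_dendron_conj h_bij h_conj. Qed.

Lemma const_iso (S S' : finType) (f : S -> S) (g : S' -> S') :
  fds_iso f g -> (forall x y, g x = g y) -> forall x y, f x = f y.
Proof. by case=> h [h_bij h_conj]; apply: const_conj h_bij h_conj. Qed.

Lemma card_iso (S S' : finType) (f : S -> S) (g : S' -> S') :
  fds_iso f g -> #|S| = #|S'|.
Proof. by case=> h [h_bij _]; apply: bij_eq_card h_bij. Qed.

Section Product.

Variables (A B : finType) (fA : A -> A) (fB : B -> B).

Lemma iter_fds_prod n p :
  iter n (fds_prod fA fB) p = (iter n fA p.1, iter n fB p.2).
Proof. by elim: n => [|n IHn] /=; [case: p | rewrite IHn]. Qed.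

Lemma fconnect_fds_prod p q :
  fconnect (fds_prod fA fB) p q -> fconnect fA p.1 q.1 /\ fconnect fB p.2 q.2.
Proof.
by move/iter_findex <-; rewrite iter_fds_prod; split; apply: fconnect_iter.
Qed.

Lemma fds_prod_swap : fds_iso (fds_prod fA fB) (fds_prod fB fA).
Proof.
by exists swap_pair; split; [exists swap_pair; apply: swap_pairK | case].
Qed.

Lemma linear_dendron_prod_snd_const :
  linear_dendron (fds_prod fA fB) -> 1 < #|A| -> forall y y', fB y = fB y'.
Proof.
case=> [[conn [[a0 b0] [fA_a0 fB_b0]]] lin] A_gt1.
have flow (p : A * B) : fconnect fA p.1 a0 /\ fconnect fB p.2 b0 :=
  let fix_ab := f_equal2 pair fA_a0 fB_b0 in
  fconnect_fds_prod (fds_connected_fconnect fix_ab conn p).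
have [x x_a0 fA_x] : exists2 x, x != a0 & fA x = a0.
  have [u u_a0] : exists u, u != a0.
    have [u [v [_ _ u_v]]] := card_gt1P A_gt1.
    by have [<- | ] := eqVneq u a0; [exists v; rewrite eq_sym | exists u].
  exact: fconnect_fixpoint_pred u_a0 (flow (u, b0)).1.
suff fB_const y : fB y = b0 by move=> y y'; rewrite !fB_const.
apply/eqP/contraT => fBy_b0.
have fBy_moves : fB (fB y) != fB y.
  apply: contra fBy_b0 => /eqP fix_y.
  by rewrite (fconnect_fixpointE fix_y (flow (a0, fB y)).2).
have /card_le1_eqP two_preds : #|preds (fds_prod fA fB) (a0, fB y)| <= 1.
  by apply: lin; rewrite /fds_prod /= xpair_eqE negb_and fBy_moves orbT.
have := two_preds (x, y) (a0, y); rewrite !inE /fds_prod /= fA_x fA_a0 !eqxx.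
by case/(_ isT isT)=> a0_x; rewrite a0_x eqxx in x_a0.
Qed.

End Product.

Lemma linear_dendron_prod_const (A B : finType) (fA : A -> A) (fB : B -> B) :
  linear_dendron (fds_prod fA fB) -> 1 < #|A| -> 1 < #|B| ->
  forall p q, fds_prod fA fB p = fds_prod fA fB q.
Proof.
move=> ld A_gt1 B_gt1 p q.
have ld_swap := linear_dendron_iso (fds_prod_swap fA fB) ld.
have fA_const := linear_dendron_prod_snd_const ld_swap B_gt1.
have fB_const := linear_dendron_prod_snd_const ld A_gt1.
by rewrite /fds_prod (fA_const p.1 q.1) (fB_const p.2 q.2).
Qed.

Lemma star_of_const (T : finType) (f : T -> T) :
  linear_dendron f -> (forall x y, f x = f y) -> is_star f #|T|.
Proof.
move=> ld f_const; have [[_ [r f_r]] _] := ld.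
do 2!split=> //; exists r; split=> // s.
by exists 1; rewrite /= (f_const s r) f_r.
Qed.

Lemma depth_le1_const (T : finType) (f : T -> T) :
  depth_le f 1 -> forall x y, f x = f y.
Proof.
case=> r [f_r depth] x y.
suff f_eq_r s : f s = r by rewrite !f_eq_r.
have [m [m_le1 iter_s]] := depth s.
by case: m m_le1 iter_s => [|[|m]] //= _ ->.
Qed.

Lemma composite_mul m n : 1 < m -> 1 < n -> composite (m * n).
Proof.
move=> m_gt1 n_gt1; apply/andP; split; first by nia.
by apply/primePn; right; exists m; [nia | apply: dvdn_mulr].
Qed.

Lemma composite_factor n :
  composite n -> exists m k, [/\ 1 < m, 1 < k & n = m * k].
Proof.
case/andP=> n_gt1 /primePn[|[m /andP[m_gt1 m_lt_n] /dvdnP[k n_eq]]].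
  by nia.
by exists m, k; split; nia.
Qed.

Lemma card_eq_bij (S S' : finType) :
  #|S| = #|S'| -> exists h : S -> S', bijective h.
Proof.
move=> card_eq; exists (fun x => enum_val (cast_ord card_eq (enum_rank x))).
apply: bij_comp; first exact: enum_val_bij.
apply: bij_comp; last exact: enum_rank_bij.
by exists (cast_ord (esym card_eq)) => i; apply: val_inj.
Qed.

Lemma const_reducible (T : finType) (f : T -> T) m n :
  (forall x y, f x = f y) -> 1 < m -> 1 < n -> #|T| = m * n -> reducible f.
Proof.
move=> f_const m_gt1 n_gt1 card_T.
have [t _] : exists t, t \in T by apply/card_gt0P; rewrite card_T; nia.
have [h h_bij] : exists h : T -> 'I_m * 'I_n, bijective h.
  by apply: card_eq_bij; rewrite card_prod !card_ord.
exists 'I_m, 'I_n, (fun _ => (h (f t)).1), (fun _ => (h (f t)).2).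
split; first by rewrite card_ord card_T; nia.
split; first by rewrite card_ord card_T; nia.
by exists h; split=> // x; rewrite (f_const x t) /fds_prod; case: (h (f t)).
Qed.

Theorem mainTheorem7 (T : finType) (f : T -> T) :
  linear_dendron f ->
  (reducible f <-> exists n : nat, is_star f n /\ composite n).
Proof.
move=> ld; split.
- case=> [A [B [fA [fB [A_lt [B_lt iso]]]]]].
  have card_T : #|T| = #|A| * #|B| by rewrite (card_iso iso) card_prod.
  have A_gt1 : 1 < #|A| by nia.
  have B_gt1 : 1 < #|B| by nia.
  have ld_prod := linear_dendron_iso iso ld.
  have prod_const := linear_dendron_prod_const ld_prod A_gt1 B_gt1.
  exists #|T|; split.
    exact: star_of_const ld (const_iso iso prod_const).
  by rewrite card_T composite_mul.
- case=> n [[_ [depth card_T]] /composite_factor[m [k [m_gt1 k_gt1 n_eq]]]].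
  apply: const_reducible (depth_le1_const depth) m_gt1 k_gt1 _.
  by rewrite card_T.
Qed.
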